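(* Let $\Lambda=\{\lambda_1,\lambda_2,\lambda_3,\lambda_4\}$ be a multiset of non-zero real numbers such that $1\in\Lambda$, $|\lambda_j|\le1$ for all $j$, and $\sum_{j=1}^4\lambda_j\ge0$. Then there exists a completely positive trace-preserving linear map $T:\mathcal{M}_4(\mathbb{C})\to\mathcal{M}_4(\mathbb{C})$ with $\mathrm{spec}(T)\setminus\{0\}=\Lambda$.
   Context: $\mathrm{spec}(T)$ is the spectrum of $T$ as an operator on $\mathcal{M}_4(\mathbb{C})$ counted with algebraic multiplicity; $\mathrm{spec}(T)\setminus\{0\}$ removes all zeros. Completely positive: $T\otimes\mathrm{id}$ maps positive semidefinite matrices to positive semidefinite ones; trace-preserving: $\mathrm{tr}[T(X)]=\mathrm{tr}[X]$. *)

From HB Require Import structures.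
From mathcomp Require Import all_boot all_order all_algebra.
Set Implicit Arguments. Unset Strict Implicit. Unset Printing Implicit Defensive.
Import Order.TTheory GRing.Theory Num.Theory.
Local Open Scope ring_scope.

Section Defs.
Variable C : numClosedFieldType.

(* Positive semidefinite matrix indexed by a finite type I:
   v^* A v >= 0 for every vector v (over C this also forces hermiticity). *)
Definition psd (I : finType) (A : I -> I -> C) : Prop :=
  forall v : I -> C, 0 <= \sum_(i : I) \sum_(j : I) (v i)^* * A i j * v j.

(* T (x) id_k acting on M_4(C) (x) M_k(C) = M_k(M_4(C)): an element is given by
   its k x k blocks X p q : 'M_4; its entry at row (a,p), column (b,q) is X p q a b. *)
Definition completely_positive (T : 'M[C]_4 -> 'M[C]_4) : Prop :=
  forall (k : nat) (X : 'I_k -> 'I_k -> 'M[C]_4),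
    psd (fun (r s : 'I_4 * 'I_k) => X r.2 s.2 r.1 s.1) ->
    psd (fun (r s : 'I_4 * 'I_k) => T (X r.2 s.2) r.1 s.1).

Definition trace_preserving (T : 'M[C]_4 -> 'M[C]_4) : Prop :=
  forall X : 'M[C]_4, \tr (T X) = \tr X.

(* Algebraic multiplicity of x in spec(T), T viewed as an operator on the
   16-dimensional space M_4(C): multiplicity of x as root of the
   characteristic polynomial of the matrix of T. *)
Definition spec_mult (T : 'M[C]_4 -> 'M[C]_4) (x : C) : nat :=
  mup x (char_poly (lin_mx T)).

End Defs.

(* The classical channel X |-> diag((diag X) P) of a row-stochastic matrix P is
   completely positive and trace preserving, and by Sylvester's identity
   X^n char_poly (U V) = X^m char_poly (V U) its nonzero spectrum is that of P.
   It thus suffices to find a 4 x 4 row-stochastic matrix with spectrum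
   {1, a, b, c}.  If two of a, b, c, say b and c, have nonnegative sum, a
   block-triangular matrix does it; otherwise all three pairwise sums are
   negative, the weights (1 +- a +- b +- c) / 4 are nonnegative, and the
   corresponding circulant over the Klein four-group, diagonalized by its
   characters, has spectrum {1, a, b, c}. *)

From HB Require Import structures.
From mathcomp Require Import all_boot all_order all_algebra ring.
Import Order.TTheory GRing.Theory Num.Theory.
Local Open Scope ring_scope.

Set Implicit Arguments.
Unset Strict Implicit.
Unset Printing Implicit Defensive.

Lemma char_poly_mulmxC (R : comNzRingType) m n (U : 'M[R]_(m, n)) (V : 'M[R]_(n, m)) :
  'X^n * char_poly (U *m V) = 'X^m * char_poly (V *m U).
Proof.
set Up := map_mx polyC U; set Vp := map_mx polyC V.
pose M := block_mx ('X%:M : 'M[{poly R}]_m) Up Vp 1%:M.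
have MU : M *m block_mx 1%:M 0 (- Vp) 1%:M = block_mx (char_poly_mx (U *m V)) Up 0 1%:M.
  rewrite mulmx_block !mulmx0 !mulmx1 ?addr0 ?add0r mulmxN mul1mx subrr.
  by rewrite /char_poly_mx map_mxM.
have VM : block_mx 1%:M 0 (- Vp) 'X%:M *m M = block_mx 'X%:M Up 0 (char_poly_mx (V *m U)).
  rewrite mulmx_block !mul1mx !mul0mx !addr0 !mulNmx.
  by rewrite /char_poly_mx map_mxM mulmx1 scalar_mxC addNr addrC.
have := congr1 determinant MU; rewrite det_mulmx det_ublock det_lblock !det1 !mulr1 => dMU.
have := congr1 determinant VM; rewrite det_mulmx det_ublock det_lblock !det1 !det_scalar mul1r.
by rewrite /char_poly -dMU => ->.
Qed.

Lemma char_poly_mulmxC_sq (F : idomainType) n (A B : 'M[F]_n) : char_poly (A *m B) = char_poly (B *m A).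
Proof. by apply: (@mulfI _ 'X^n); [rewrite expf_neq0 ?polyX_eq0 | rewrite char_poly_mulmxC]. Qed.

Lemma char_poly_conj (F : idomainType) n (W A B : 'M[F]_n) :
  W \in unitmx -> W *m A = B *m W -> char_poly A = char_poly B.
Proof.
move=> Wu WA; have -> : A = invmx W *m (B *m W) by rewrite -WA mulKmx.
by rewrite char_poly_mulmxC_sq -mulmxA mulmxV ?mulmx1.
Qed.

Lemma char_poly_scaled_conj (F : fieldType) n (d : F) (W Q D : 'M[F]_n) :
  d != 0 -> W *m W = d%:M -> W *m Q = d *: (D *m W) -> char_poly (d^-1 *: Q) = char_poly D.
Proof.
move=> d0 WW WQ; apply: (@char_poly_conj _ _ W).
  have WWV : W *m (d^-1 *: W) = 1%:M by rewrite -scalemxAr WW scale_scalar_mx mulVf.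
  by have [] := mulmx1_unit WWV.
by rewrite -scalemxAr WQ scalerA mulVf ?scale1r.
Qed.

Section DiagonalChannel.
Variables (R : comNzRingType) (n : nat).

Definition vec_diag (u : 'rV[R]_(n * n)) : 'rV[R]_n := \row_j vec_mx u j j.

Lemma vec_diag_is_linear : linear vec_diag.
Proof. by move=> k u w; apply/rowP => j; rewrite !mxE. Qed.
HB.instance Definition _ := GRing.isLinear.Build R _ _ _ vec_diag vec_diag_is_linear.

Definition diag_vec (v : 'rV[R]_n) : 'rV[R]_(n * n) := mxvec (diag_mx v).

Lemma diag_vec_is_linear : linear diag_vec.
Proof. by move=> k u w; rewrite /diag_vec !linearP. Qed.
HB.instance Definition _ := GRing.isLinear.Build R _ _ _ diag_vec diag_vec_is_linear.

Variable P : 'M[R]_n.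

Definition diag_channel (X : 'M[R]_n) : 'M[R]_n := diag_mx (\row_j X j j *m P).

Lemma diag_channel_is_linear : linear diag_channel.
Proof.
move=> k X Y; rewrite /diag_channel -linearP scalemxAl -mulmxDl.
by congr (diag_mx (_ *m P)); apply/rowP => j; rewrite !mxE.
Qed.
HB.instance Definition _ := GRing.isLinear.Build R _ _ _ diag_channel diag_channel_is_linear.

Lemma lin_mx_diag_channel :
  lin_mx diag_channel = lin1_mx vec_diag *m (P *m lin1_mx diag_vec).
Proof.
apply/row_matrixP => k; rewrite !rowE mul_rV_lin !mulmxA.
by rewrite (mul_rV_lin1 vec_diag) (mul_rV_lin1 diag_vec).
Qed.

Lemma lin1_mx_diag_vecK : lin1_mx diag_vec *m lin1_mx vec_diag = 1%:M.
Proof.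
apply/row_matrixP => j; rewrite !rowE mulmxA mulmx1.
rewrite (mul_rV_lin1 diag_vec) (mul_rV_lin1 vec_diag).
by apply/rowP => l; rewrite mxE /diag_vec mxvecK !mxE !eqxx mulr1n.
Qed.

Lemma char_poly_diag_channel :
  'X^n * char_poly (lin_mx diag_channel) = 'X^(n * n) * char_poly P.
Proof.
by rewrite lin_mx_diag_channel char_poly_mulmxC -mulmxA lin1_mx_diag_vecK mulmx1.
Qed.

Lemma mxtrace_diag_channel X : (forall i, \sum_j P i j = 1) -> \tr (diag_channel X) = \tr X.
Proof.
move=> Psum; rewrite mxtrace_diag.
under eq_bigr => j _ do rewrite !mxE.
rewrite exchange_big; apply: eq_bigr => i _.
by rewrite -mulr_sumr Psum mulr1 mxE.
Qed.

End DiagonalChannel.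

Lemma mup_char_poly_diag_channel (F : fieldType) n (P : 'M[F]_n) x : x != 0 ->
  mup x (char_poly (lin_mx (diag_channel P))) = mup x (char_poly P).
Proof.
move=> x0; have Xk_root k : ~~ root 'X^k x by rewrite /root hornerXn expf_neq0.
by rewrite -(mupMr _ (Xk_root n)) char_poly_diag_channel mupMr.
Qed.

Lemma sum_pairE (V : nmodType) (I J : finType) (F : I * J -> V) :
  \sum_r F r = \sum_i \sum_j F (i, j).
Proof. by rewrite pair_big; apply: eq_bigr => -[]. Qed.

Lemma sum_slice (V : nmodType) (I J : finType) (F : I * J -> V) c :
  \sum_r (if r.1 == c then F r else 0) = \sum_q F (c, q).
Proof.
rewrite sum_pairE (bigD1 c) //= [X in _ + X]big1 ?addr0 => [|i ic].
  by apply: eq_bigr => q _; rewrite eqxx.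
by apply: big1 => q _; rewrite (negbTE ic).
Qed.

Section CompletePositivity.
Variable C : numClosedFieldType.

Lemma psd_slice (I J : finType) (A : I * J -> I * J -> C) c :
  psd A -> psd (fun p q : J => A (c, p) (c, q)).
Proof.
move=> A_psd u; have := A_psd (fun r => if r.1 == c then u r.2 else 0).
rewrite (eq_bigr (fun r => if r.1 == c then \sum_q (u r.2)^* * A r (c, q) * u q else 0)).
  by rewrite sum_slice; apply.
move=> r _; case: eqP => _; last by apply: big1 => s _; rewrite conjC0 !mul0r.
rewrite (eq_bigr (fun s => if s.1 == c then (u r.2)^* * A r s * u s.2 else 0)) ?sum_slice //.
by move=> s _; case: eqP => _; rewrite ?mulr0.
Qed.

Variables (n : nat) (P : 'M[C]_n).
Hypothesis P_ge0 : forall i j, 0 <= P i j.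

Lemma psd_diag_channel k (X : 'I_k -> 'I_k -> 'M[C]_n) :
  psd (fun r s : 'I_n * 'I_k => X r.2 s.2 r.1 s.1) ->
  psd (fun r s : 'I_n * 'I_k => diag_channel P (X r.2 s.2) r.1 s.1).
Proof.
move=> X_psd v.
set S := (X in 0 <= X).
have -> : S = \sum_a \sum_c P c a *
    \sum_p \sum_q (v (a, p))^* * X p q c c * v (a, q).
  rewrite /S.
  transitivity (\sum_r \sum_s (if s.1 == r.1 then (v r)^* *
      (\sum_c X r.2 s.2 c c * P c r.1) * v s else 0)).
    apply: eq_bigr => r _; apply: eq_bigr => s _; rewrite !mxE eq_sym.
    case: eqP => _; last by rewrite mulr0n mulr0 mul0r.
    by rewrite mulr1n; congr (_ * _ * _); apply: eq_bigr => c _; rewrite mxE.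
  under eq_bigr => r _ do rewrite sum_slice.
  rewrite sum_pairE; apply: eq_bigr => a _.
  symmetry; under eq_bigr => c _ do rewrite mulr_sumr.
  rewrite exchange_big /=; apply: eq_bigr => p _.
  under eq_bigr => c _ do rewrite mulr_sumr.
  rewrite exchange_big /=; apply: eq_bigr => q _.
  rewrite mulr_sumr mulr_suml; apply: eq_bigr => c _.
  by rewrite mulrCA !mulrA [_ * P c a]mulrC.
apply: sumr_ge0 => a _; apply: sumr_ge0 => c _; apply: mulr_ge0 => //.
exact: (psd_slice c X_psd (fun p => v (a, p))).
Qed.

End CompletePositivity.

Section StochasticRealizations.
Variable R : numFieldType.

Definition row_stochastic n (P : 'M[R]_n) : Prop :=
  (forall i j, 0 <= P i j) /\ (forall i, \sum_j P i j = 1).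

Lemma row_stochastic_scale n (d : R) (Q : 'M[R]_n) :
  0 < d -> (forall i j, 0 <= Q i j) -> (forall i, \sum_j Q i j = d) ->
  row_stochastic (d^-1 *: Q).
Proof.
move=> d_gt0 Q_ge0 Q_sum; split=> [i j|i]; rewrite ?mxE.
  by rewrite mulr_ge0 // invr_ge0 ltW.
by under eq_bigr => j _ do rewrite mxE; rewrite -mulr_sumr Q_sum mulVf ?gt_eqF.
Qed.

Lemma row_stochastic_scaled_conj n (d : R) (W Q D : 'M[R]_n) :
  0 < d -> W *m W = d%:M -> W *m Q = d *: (D *m W) ->
  (forall i j, 0 <= Q i j) -> (forall i, \sum_j Q i j = d) ->
  row_stochastic (d^-1 *: Q) /\ char_poly (d^-1 *: Q) = char_poly D.
Proof.
move=> d_gt0 WW WQ Q_ge0 Q_sum; split; first exact: row_stochastic_scale.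
by apply: char_poly_scaled_conj WW WQ; rewrite gt_eqF.
Qed.

Definition mx4 (s : seq (seq R)) : 'M[R]_4 := \matrix_(i, j) nth 0 (nth [::] s i) j.

Ltac mx4_entrywise :=
  apply/matrixP => -[[|[|[|[|?]]]] ?] // -[[|[|[|[|?]]]] ?] //;
  rewrite !mxE ?big_ord_recr ?big_ord0 /= ?mxE /= ?mulr1n ?mulr0n.

Ltac mx4_rowwise :=
  case=> [[|[|[|[|?]]]] ?] //; rewrite !big_ord_recr big_ord0 /= !mxE /=.

Ltac mx4_pointwise := move=> -[[|[|[|[|?]]]] ?] // -[[|[|[|[|?]]]] ?] //; rewrite mxE.

Section Klein.
Variables a b c : R.

Let w0 := 1 + a + b + c.
Let w1 := 1 - a + b - c.
Let w2 := 1 + a - b - c.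
Let w3 := 1 - a - b + c.

Lemma klein_realization : 0 <= w0 -> 0 <= w1 -> 0 <= w2 -> 0 <= w3 ->
  exists P : 'M[R]_4,
    row_stochastic P /\ char_poly P = \prod_(x <- [:: 1; a; b; c]) ('X - x%:P).
Proof.
move=> w0_ge0 w1_ge0 w2_ge0 w3_ge0.
pose W := mx4 [:: [:: 1; 1; 1; 1]; [:: 1; -1; 1; -1]; [:: 1; 1; -1; -1]; [:: 1; -1; -1; 1]].
pose D := mx4 [:: [:: 1; 0; 0; 0]; [:: 0; a; 0; 0]; [:: 0; 0; b; 0]; [:: 0; 0; 0; c]].
(* Q = W D W, where W is the character table of the Klein four-group. *)
pose Q := mx4 [:: [:: w0; w1; w2; w3]; [:: w1; w0; w3; w2];
                  [:: w2; w3; w0; w1]; [:: w3; w2; w1; w0]].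
have [|||||Q_stoch Q_char] := @row_stochastic_scaled_conj _ 4 W Q D.
- by rewrite ltr0n.
- by mx4_entrywise; ring.
- by mx4_entrywise; rewrite /w0 /w1 /w2 /w3; ring.
- by mx4_pointwise.
- by mx4_rowwise; rewrite /w0 /w1 /w2 /w3; ring.
exists (4^-1 *: Q); split=> //; rewrite Q_char char_poly_trig; last first.
  by apply/is_trig_mxP; mx4_pointwise.
by rewrite !big_ord_recr big_ord0 !big_cons big_nil /= !mxE /= mul1r mulr1 !mulrA.
Qed.

End Klein.

Section Block.
Variables a b c : R.

Lemma block_realization : 0 <= 1 + a -> 0 <= 1 - a -> 0 <= 1 - b -> 0 <= b + c -> 0 <= b - c ->
  exists P : 'M[R]_4,
    row_stochastic P /\ char_poly P = \prod_(x <- [:: 1; a; b; c]) ('X - x%:P).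
Proof.
move=> a_ge a_le b_le bc_ge bc_le.
pose W := mx4 [:: [:: 1; 1; 0; 0]; [:: 1; -1; 0; 0]; [:: 0; 0; 1; 1]; [:: 0; 0; 1; -1]].
pose D := mx4 [:: [:: 1; 0; 0; 0]; [:: 0; a; 0; 0]; [:: 1 - b; 0; b; 0]; [:: 0; 0; 0; c]].
(* Q = W D W, where W is the direct sum of two 2 x 2 Hadamard matrices. *)
pose Q := mx4 [:: [:: 1 + a; 1 - a; 0; 0]; [:: 1 - a; 1 + a; 0; 0];
                  [:: 1 - b; 1 - b; b + c; b - c]; [:: 1 - b; 1 - b; b - c; b + c]].
have [|||||Q_stoch Q_char] := @row_stochastic_scaled_conj _ 2 W Q D.
- by rewrite ltr0n.
- by mx4_entrywise; ring.
- by mx4_entrywise; ring.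
- by mx4_pointwise.
- by mx4_rowwise; ring.
exists (2^-1 *: Q); split=> //; rewrite Q_char char_poly_trig; last first.
  by apply/is_trig_mxP; mx4_pointwise.
by rewrite !big_ord_recr big_ord0 !big_cons big_nil /= !mxE /= mul1r mulr1 !mulrA.
Qed.

End Block.

Lemma real_norm_le1 (x : R) : x \is Num.real -> `|x| <= 1 -> 0 <= 1 + x /\ 0 <= 1 - x.
Proof.
move=> xr; rewrite real_ler_norml // => /andP[x_ge x_le].
by split; [rewrite addrC -[1]opprK subr_ge0 | rewrite subr_ge0].
Qed.

Lemma block_realization_sym (x y z : R) :
  x \is Num.real -> y \is Num.real -> z \is Num.real ->
  `|x| <= 1 -> `|y| <= 1 -> `|z| <= 1 -> 0 <= y + z ->
  exists P : 'M[R]_4,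
    row_stochastic P /\ char_poly P = \prod_(t <- [:: 1; x; y; z]) ('X - t%:P).
Proof.
move=> xr yr zr x_le1 y_le1 z_le1.
wlog zy : y z yr zr y_le1 z_le1 / z <= y => [sym yz_ge0|yz_ge0].
  have [zy|/ltW yz] := real_leP zr yr; first exact: sym zy yz_ge0.
  rewrite addrC in yz_ge0; have [P [P_stoch P_char]] := sym z y zr yr z_le1 y_le1 yz yz_ge0.
  exists P; split=> //; rewrite P_char; apply: perm_big.
  by rewrite !perm_cons (perm_catC [:: z] [:: y]).
have [x_ge x_le] := real_norm_le1 xr x_le1.
have [_ y_le] := real_norm_le1 yr y_le1.
by apply: block_realization; rewrite // subr_ge0.
Qed.

Lemma stochastic_realization (a b c : R) :
  a \is Num.real -> b \is Num.real -> c \is Num.real ->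
  `|a| <= 1 -> `|b| <= 1 -> `|c| <= 1 -> 0 <= 1 + a + b + c ->
  exists P : 'M[R]_4,
    row_stochastic P /\ char_poly P = \prod_(t <- [:: 1; a; b; c]) ('X - t%:P).
Proof.
move=> ar br cr a_le1 b_le1 c_le1 sum_ge0.
have [bc_ge0|bc_lt0] := real_ge0P (rpredD br cr); first exact: block_realization_sym.
have [ac_ge0|ac_lt0] := real_ge0P (rpredD ar cr).
  have [P [P_stoch P_char]] := block_realization_sym br ar cr b_le1 a_le1 c_le1 ac_ge0.
  exists P; split=> //; rewrite P_char; apply: perm_big.
  by rewrite perm_cons (perm_catCA [:: b] [:: a] [:: c]).
have [ab_ge0|ab_lt0] := real_ge0P (rpredD ar br).
  have [P [P_stoch P_char]] := block_realization_sym cr ar br c_le1 a_le1 b_le1 ab_ge0.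
  exists P; split=> //; rewrite P_char; apply: perm_big.
  by rewrite perm_cons (perm_catC [:: c] [:: a; b]).
have sub_neg_ge0 (u v w : R) : 0 <= 1 + u -> v + w < 0 -> 0 <= (1 + u) - (v + w).
  by move=> u_ge v_lt; rewrite subr_ge0 (le_trans (ltW v_lt)).
have [a_ge _] := real_norm_le1 ar a_le1.
have [b_ge _] := real_norm_le1 br b_le1.
have [c_ge _] := real_norm_le1 cr c_le1.
apply: klein_realization => //.
- by have := sub_neg_ge0 _ _ _ b_ge ac_lt0; congr (0 <= _); ring.
- by have := sub_neg_ge0 _ _ _ a_ge bc_lt0; congr (0 <= _); ring.
- by have := sub_neg_ge0 _ _ _ c_ge ab_lt0; congr (0 <= _); ring.
Qed.

End StochasticRealizations.

Theorem theorem6 (C : numClosedFieldType) (Lambda : 4.-tuple C) :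
  (forall l, l \in Lambda -> l \is Num.real) ->
  (forall l, l \in Lambda -> l != 0) ->
  1 \in Lambda ->
  (forall l, l \in Lambda -> `|l| <= 1) ->
  0 <= \sum_(l <- Lambda) l ->
  exists T : {linear 'M[C]_4 -> 'M[C]_4},
    completely_positive T /\ trace_preserving T /\
    (forall x : C, x != 0 -> spec_mult T x = count_mem x Lambda).
Proof.
move=> L_real _ L1 L_le1 L_sum. (* the entries of Lambda need not be nonzero *)
have /perm_to_rem L_perm := L1.
have : size (rem 1 Lambda) = 3 by rewrite size_rem // size_tuple.
case: (rem 1 Lambda) L_perm => [|a [|b [|c [|? ?]]]] // L_perm _.
have : all (fun t => (t \is Num.real) && (`|t| <= 1)) Lambda.
  by apply/allP => t tL; rewrite L_real ?L_le1.
rewrite (perm_all _ L_perm) /= andbT => /and4P[_ /andP[ar a_le1] /andP[br b_le1] /andP[cr c_le1]].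
rewrite (perm_big _ L_perm) !big_cons big_nil /= addr0 !addrA in L_sum.
have [P [[P_ge0 P_sum] P_char]] := stochastic_realization ar br cr a_le1 b_le1 c_le1 L_sum.
exists (diag_channel P); split; first by move=> k X; apply: psd_diag_channel.
split; first by move=> X; apply: mxtrace_diag_channel.
move=> x x_neq0; rewrite /spec_mult mup_char_poly_diag_channel // P_char mu_prod_XsubC.
by rewrite (permP L_perm).
Qed.
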